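(* Let $x$ be an allocation rule and suppose Assumptions D, X and T hold. Fix $i$ and $\theta$ with $0<X_i(\theta)<1$. Let $\bar t_i^w(\theta),\bar t_i^l(\theta)\in\mathbb{R}$ satisfy $\alpha\bar t_i^w(\theta)-\beta\bar t_i^l(\theta)\le K$ and $\theta-\bar t_i^w(\theta)<-\bar t_i^l(\theta)$, and let $\bar t_i(\theta,\cdot):=\bar t_i^w(\theta)x_i(\theta,\cdot)+\bar t_i^l(\theta)(1-x_i(\theta,\cdot))$. Then there exist $\widetilde t_i^w(\theta),\widetilde t_i^l(\theta)\in\mathbb{R}$ such that, with $\widetilde t_i(\theta,\cdot):=\widetilde t_i^w(\theta)x_i(\theta,\cdot)+\widetilde t_i^l(\theta)(1-x_i(\theta,\cdot))$: (i) $\widetilde T_i(\theta)\ge\bar T_i(\theta)$; (ii) $\widetilde U_i^{\min}(\theta)=\bar U_i^{\min}(\theta)$; (iii) $\alpha\widetilde t_i^w(\theta)-\beta\widetilde t_i^l(\theta)\le K$; (iv) $\theta-\widetilde t_i^w(\theta)=-\widetilde t_i^l(\theta)$. Here for an interim transfer $s(\cdot)$ (either $\bar t_i(\theta,\cdot)$ or $\widetilde t_i(\theta,\cdot)$) the interim revenue is $\int_\Theta s(\theta')dP(\theta')$ and the interim worst-case utility is $\inf_Q\{\int_\Theta[\theta x_i(\theta,\theta')-s(\theta')]dQ(\theta'):D(Q\|P)\le\eta\}$.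
   Context: $\Theta=[\underline\theta,\bar\theta]$ with $0<\underline\theta<\bar\theta$, Borel $\sigma$-algebra $\mathcal{B}$; ''$\sigma$-algebra'' means sub-$\sigma$-algebra of $\mathcal{B}$; $\Delta(\Theta,\mathcal{A})$ is the set of probability measures on $(\Theta,\mathcal{A})$; $P_{\mathcal{E}}$ is restriction. A divergence $D$ assigns to each pair $Q,P$ of probability measures on a common $\sigma$-algebra a value in $[0,\infty]$. Assumption D: for every $\sigma$-algebra $\mathcal{A}$, $P,Q\in\Delta(\Theta,\mathcal{A})$: (D1) $D(Q\|P)=0$ if $Q=P$; (D2) if $Q\ll P$ with bounded $dQ/dP$, $\epsilon\mapsto D(\epsilon Q+(1-\epsilon)P\|P)$ is continuous on $[0,1]$; (D3) $D(Q\|P)<\infty\Rightarrow Q\ll P$; (D4) $D(Q_{\mathcal{E}}\|P_{\mathcal{E}})\le D(Q\|P)$ for sub-$\sigma$-algebras $\mathcal{E}\subset\mathcal{A}$; (D5) equality in (D4) when $dQ_{\mathcal{E}}/dP_{\mathcal{E}}=dQ/dP$ $P$-a.e. Fix atomless $P\in\Delta(\Theta,\mathcal{B})$ and $\eta>0$; $Q$ ranges over $\Delta(\Theta,\mathcal{B})$. Two bidders $i\in\{1,2\}$; an allocation rule is bounded measurable $x=(x_1,x_2):\Theta^2\to\mathbb{R}^2$ with $x_1(\theta,\theta')\ge0$, $x_2(\theta',\theta)\ge0$, $x_1(\theta,\theta')+x_2(\theta',\theta)\le1$. $X_i(\theta)=\int x_i(\theta,\theta')dP(\theta')$, $X_i^{\min}(\theta)=\inf_Q\{\int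 x_i(\theta,\theta')dQ(\theta'):D(Q\|P)\le\eta\}$. Assumption X: (i) $x_i(\theta,\theta')\in\{0,1\}$ for $\theta'\ne\theta$; (ii) $X_i(\theta)=1\Rightarrow\theta=\bar\theta$; (iii) $X_i^{\min}$ non-decreasing. Assumption T: constants $0\le\alpha\le\beta\le1$ and $K\ge0$ are given (they define the class of transfer rules $t$ with $\alpha t_i(\theta,\theta^w)-\beta t_i(\theta,\theta^l)\le K$ whenever $\theta<\bar\theta$, $x_i(\theta,\theta^w)=1$, $x_i(\theta,\theta^l)=0$). *)

From HB Require Import structures.
From mathcomp Require Import all_boot all_order all_algebra.
From mathcomp Require Import all_classical all_reals all_analysis.
Set Implicit Arguments. Unset Strict Implicit. Unset Printing Implicit Defensive.
Import Order.TTheory GRing.Theory Num.Theory.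
Local Open Scope classical_set_scope.
Local Open Scope ring_scope.

Section ThetaSpace.
Variables (R : realType) (a b : R) (hab : a < b).

(* carrier of Theta = [a, b]; the proof hab is only used to provide a point *)
Definition ThetaC (_ : a < b) := {x : R | a <= x <= b}.

Lemma ThetaC_pt_proof : a <= a <= b.
Proof. by rewrite lexx /= ltW. Qed.

HB.instance Definition _ := Choice.on (ThetaC hab).
HB.instance Definition _ :=
  isPointed.Build (ThetaC hab) (exist _ a ThetaC_pt_proof).

Definition BorTheta : set (set (ThetaC hab)) :=
  preimage_set_system setT (@sval R (fun x => a <= x <= b)) measurable.

Definition Theta := g_sigma_algebraType BorTheta.

End ThetaSpace.

Section Model.
Variables (R : realType) (a b : R) (hab : a < b).
Local Notation T := (Theta hab).
Local Open Scope ereal_scope.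

(* "sigma-algebra" = sub-sigma-algebra of the Borel sigma-algebra of Theta *)
Definition sub_sigma (A : set (set T)) : Prop :=
  sigma_algebra setT A /\ A `<=` (measurable : set (set T)).

Definition PM (A : set (set T)) := probability (g_sigma_algebraType A) R.

(* a divergence: a value for each pair Q, P of probability measures on a
   common sigma-algebra; D A Q P stands for D(Q || P) *)
Definition divergence := forall A : set (set T), PM A -> PM A -> \bar R.

Definition is_density (A : set (set T)) (Q P : PM A) (f : T -> R) : Prop :=
  [/\ measurable_fun (setT : set (g_sigma_algebraType A)) f,
      (forall t, (0 <= f t)%R) &
      forall S : set (g_sigma_algebraType A), measurable S ->
        Q S = \int[P]_(t in S) (f t)%:E].

Definition assumption_D (D : divergence) : Prop :=
  (forall A (Q P : PM A), 0 <= D A Q P) /\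
  [/\
      (forall A, sub_sigma A -> forall P : PM A, D A P P = 0),
      (forall A, sub_sigma A -> forall (Q P : PM A),
         (exists f, is_density Q P f /\ exists M : R, forall t, (f t <= M)%R) ->
         forall Mix : R -> PM A,
           (forall e : R, (0 <= e <= 1)%R ->
              forall S : set (g_sigma_algebraType A), measurable S ->
                Mix e S = e%:E * Q S + (1 - e)%:E * P S) ->
           {within `[0%R, 1%R], continuous (fun e : R => D A (Mix e) P)}),
      (forall A, sub_sigma A -> forall (Q P : PM A),
         D A Q P < +oo ->
         forall S : set (g_sigma_algebraType A), measurable S ->
           P S = 0 -> Q S = 0),
      (forall A E, sub_sigma A -> sub_sigma E -> E `<=` A ->
         forall (Q P : PM A) (QE PE : PM E),
           (forall S, E S -> QE S = Q S /\ PE S = P S) ->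
           D E QE PE <= D A Q P) &
      (forall A E, sub_sigma A -> sub_sigma E -> E `<=` A ->
         forall (Q P : PM A) (QE PE : PM E),
           (forall S, E S -> QE S = Q S /\ PE S = P S) ->
           (exists fE fA, is_density QE PE fE /\ is_density Q P fA /\
                          {ae P, forall t, fE t = fA t}) ->
           D E QE PE = D A Q P)].

Definition DB (D : divergence) (Q P : probability T R) : \bar R :=
  D (@BorTheta R a b hab) Q P.

Definition atomless (P : probability T R) : Prop :=
  forall S : set T, measurable S -> 0 < P S ->
    exists S' : set T, [/\ measurable S', S' `<=` S & 0 < P S' < P S].

(* allocation rule: x i t t' is the allocation of bidder i when his type is t
   and the other bidder's type is t'; ord0 = bidder 1, ord_max = bidder 2 *)
Definition allocation_rule (x : 'I_2 -> T -> T -> R) : Prop :=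
  [/\ (forall i, measurable_fun setT (fun p : T * T => x i p.1 p.2)),
      (exists M : R, forall i t t', (`|x i t t'| <= M)%R),
      (forall i t t', (0 <= x i t t')%R) &
      (forall t t', (x ord0 t t' + x ord_max t' t <= 1)%R)].

Definition Xint (P : probability T R) (x : 'I_2 -> T -> T -> R) i (t : T)
  : \bar R := \int[P]_t' (x i t t')%:E.

Definition feasible (D : divergence) (P : probability T R) (eta : R) :=
  [set Q : probability T R | DB D Q P <= eta%:E].

Definition Xmin D P eta (x : 'I_2 -> T -> T -> R) i (t : T) : \bar R :=
  ereal_inf [set \int[Q]_t' (x i t t')%:E | Q in feasible D P eta].

Definition assumption_X D P eta (x : 'I_2 -> T -> T -> R) : Prop :=
  forall i,
  [/\ (forall t t', t' <> t -> x i t t' = 0%R \/ x i t t' = 1%R),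
      (forall t, Xint P x i t = 1 -> val t = b) &
      (forall t t', (val t <= val t')%R -> Xmin D P eta x i t <= Xmin D P eta x i t')].

Definition assumption_T (alpha beta K : R) : Prop :=
  (0 <= alpha <= beta)%R /\ (beta <= 1)%R /\ (0 <= K)%R.

Definition interim_transfer (x : 'I_2 -> T -> T -> R) i (t : T) (tw tl : R)
  (t' : T) : R := (tw * x i t t' + tl * (1 - x i t t'))%R.

Definition interim_revenue P x i t tw tl : \bar R :=
  \int[P]_t' (interim_transfer x i t tw tl t')%:E.

Definition interim_Umin D P eta x i (t : T) tw tl : \bar R :=
  ereal_inf [set \int[Q]_t' ((val t * x i t t' - interim_transfer x i t tw tl t')%R)%:E
            | Q in feasible D P eta].

End Model.

From HB Require Import structures.
From mathcomp Require Import all_boot all_order all_algebra.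
From mathcomp Require Import all_classical all_reals all_analysis.
From mathcomp Require Import lra ring.
Import Order.TTheory GRing.Theory Num.Theory.
Local Open Scope classical_set_scope.
Local Open Scope ring_scope.

(** With transfers affine in the allocation, the interim utility under [Q] is
    [c * X_Q - tl] with [c = theta - tw + tl < 0], so its worst case over the
    ambiguity set is [c * m - tl], where [m] is the supremum of the [X_Q].
    The indifferent transfers ([c = 0], [tl' = tl - c * m]) keep this worst
    case, raise the revenue by [c * (X_P - m) >= 0] and change
    [alpha tw - beta tl] by [c * (alpha + (beta - alpha) * m) <= 0]. *)

Lemma ereal_inf_EFin_npos_affine (R : realType) (S : set R) (c d : R) :
  c <= 0 -> S !=set0 -> has_ubound S ->
  ereal_inf [set (c * y - d)%:E | y in S] = (c * sup S - d)%:E.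
Proof.
move=> c_le0 [y0 Sy0] ubS.
have supS : has_sup S by split => //; exists y0.
apply/le_anti/andP; split; last first.
  apply/ereal_infP => _ [y Sy <-]; rewrite lee_fin.
  have := sup_upper_bound supS Sy; nra.
apply/lee_addgt0Pr => e e_gt0.
have e'_gt0 : 0 < e / (1 - c) by apply: divr_gt0 => //; lra.
have [y Sy lt_y] := sup_adherent e'_gt0 supS.
apply: le_trans (ereal_inf_lbound _) _; first by exists y.
have eE : (1 - c) * (e / (1 - c)) = e by rewrite mulrCA divff ?mulr1 //; lra.
have := sup_upper_bound supS Sy.
rewrite -EFinD lee_fin; move: e'_gt0 lt_y eE; set e' := e / (1 - c); nra.
Qed.

Definition mean {R : realType} {d} {T : measurableType d} (Q : probability T R)
  (f : T -> R) : R := fine (\int[Q]_t (f t)%:E).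

Lemma integral_cst_probability {R : realType} {d} {T : measurableType d}
  (Q : probability T R) (r : R) : (\int[Q]_t r%:E = r%:E)%E.
Proof. by move: (@expectation_cst _ _ _ Q r); rewrite unlock. Qed.

Section bounded_integrals.
Context {R : realType} {d} {T : measurableType d} (Q : probability T R).
Context {f : T -> R} {M : R}.
Hypotheses (mf : measurable_fun setT f) (f_bounded : forall t, `|f t| <= M).

Lemma bounded_integrable : Q.-integrable setT (EFin \o f).
Proof.
apply: measurable_bounded_integrable => //.
  by change (Q setT < +oo)%E; rewrite probability_setT ltry.
exists M; split; first exact: num_real.
by move=> N ltMN t _; apply: le_trans (f_bounded t) (ltW ltMN).
Qed.

Lemma integralE_mean : (\int[Q]_t (f t)%:E = (mean Q f)%:E)%E.
Proof. by rewrite fineK // (integrable_fin_num measurableT bounded_integrable). Qed.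

Lemma integral_affine (u v : R) :
  (\int[Q]_t (u * f t + v)%:E = (u * mean Q f + v)%:E)%E.
Proof.
under eq_integral do rewrite EFinD EFinM.
rewrite integralD //; last 2 first.
- exact: integrableZl bounded_integrable.
- exact: finite_measure_integrable_cst.
rewrite integralZl ?integralE_mean ?integral_cst_probability //.
exact: bounded_integrable.
Qed.

Lemma mean_le_bound : mean Q f <= M.
Proof.
rewrite -lee_fin -integralE_mean -(integral_cst_probability Q M).
apply: le_integral => //; first exact: bounded_integrable.
  exact: finite_measure_integrable_cst.
by move=> t _; rewrite lee_fin (le_trans (ler_norm _)).
Qed.

End bounded_integrals.

Lemma sub_sigma_BorTheta {R : realType} {a b : R} (hab : a < b) :
  sub_sigma (@BorTheta R a b hab).
Proof.
split; last exact: sub_gen_smallest.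
by apply: sigma_algebra_preimage; exact: sigma_algebra_measurable.
Qed.

Definition Xsup {R : realType} {a b : R} {hab : a < b} (D : divergence hab)
  (P : probability (Theta hab) R) (eta : R)
  (x : 'I_2 -> Theta hab -> Theta hab -> R) (i : 'I_2) (t : Theta hab) : R :=
  sup [set mean Q (x i t) | Q in feasible D P eta].

Section interim_transfers.
Context {R : realType} {a b : R} {hab : a < b}.
Context {D : divergence hab} {P : probability (Theta hab) R} {eta : R}.
Context {x : 'I_2 -> Theta hab -> Theta hab -> R} {i : 'I_2} {t : Theta hab}.
Context {M : R}.
Hypothesis D_refl : forall A, sub_sigma A -> forall P : PM A, D A P P = 0.
Hypothesis eta_ge0 : 0 <= eta.
Hypotheses (mx : measurable_fun setT (x i t)) (x_bounded : forall t', `|x i t t'| <= M).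

Lemma feasible_center : feasible D P eta P.
Proof. by rewrite /feasible /DB /= (D_refl _ (sub_sigma_BorTheta hab) P) lee_fin. Qed.

Let has_ubound_means : has_ubound [set mean Q (x i t) | Q in feasible D P eta].
Proof. by exists M => _ [Q _ <-]; exact: (mean_le_bound _ mx x_bounded). Qed.

Lemma XintE : Xint P x i t = (mean P (x i t))%:E.
Proof. by rewrite /Xint (integralE_mean P mx x_bounded). Qed.

Lemma mean_le_Xsup (Q : probability (Theta hab) R) :
  feasible D P eta Q -> mean Q (x i t) <= Xsup D P eta x i t.
Proof.
move=> FQ; apply: sup_upper_bound; last by exists Q.
by split; first by exists (mean Q (x i t)), Q.
Qed.

Lemma interim_revenueE tw tl :
  interim_revenue P x i t tw tl = ((tw - tl) * mean P (x i t) + tl)%:E.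
Proof.
rewrite /interim_revenue -(integral_affine P mx x_bounded).
by apply: eq_integral => t' _; congr EFin; rewrite /interim_transfer; ring.
Qed.

Lemma interim_UminE tw tl : val t - tw + tl <= 0 ->
  interim_Umin D P eta x i t tw tl = ((val t - tw + tl) * Xsup D P eta x i t - tl)%:E.
Proof.
move=> c_le0; rewrite /Xsup -ereal_inf_EFin_npos_affine //; last first.
  by exists (mean P (x i t)), P => //; exact: feasible_center.
rewrite /interim_Umin image_comp; congr ereal_inf; apply: eq_imagel => Q _ /=.
rewrite -(integral_affine Q mx x_bounded).
by apply: eq_integral => t' _; congr EFin; rewrite /interim_transfer; ring.
Qed.

End interim_transfers.

Theorem lemma3 (R : realType) (a b : R) (ha : 0 < a) (hab : a < b)
  (D : divergence hab) (P : probability (Theta hab) R) (eta : R)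
  (x : 'I_2 -> Theta hab -> Theta hab -> R) (alpha beta K : R) :
  assumption_D D -> atomless P -> 0 < eta ->
  allocation_rule x -> assumption_X D P eta x -> assumption_T alpha beta K ->
  forall (i : 'I_2) (t : Theta hab),
  (0 < Xint P x i t < 1)%E ->
  forall twb tlb : R,
  alpha * twb - beta * tlb <= K -> val t - twb < - tlb ->
  exists twt tlt : R,
    [/\ (interim_revenue P x i t twb tlb <= interim_revenue P x i t twt tlt)%E,
        interim_Umin D P eta x i t twt tlt = interim_Umin D P eta x i t twb tlb,
        alpha * twt - beta * tlt <= K &
        val t - twt = - tlt].
Proof.
move=> [_ [D_refl _ _ _ _]] _ /ltW eta_ge0 [x_meas [M x_bounded] _ _] _.
move=> [/andP[alpha_ge0 alpha_le_beta] _] i t + twb tlb budget twb_large.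
have mx : measurable_fun setT (x i t) :=
  measurableT_comp (x_meas i) (pair1_measurable t).
have xb := x_bounded i t.
rewrite (XintE mx xb) lte_fin => /andP[X_gt0 _].
set X := mean P (x i t) in X_gt0.
set m := Xsup D P eta x i t.
have X_le_m : X <= m := mean_le_Xsup mx xb P (feasible_center D_refl eta_ge0).
pose c := val t - twb + tlb; have c_lt0 : c < 0 by rewrite /c; lra.
pose tlt := tlb - c * m; pose twt := val t + tlt.
have indifferent : val t - twt + tlt = 0 by rewrite /twt; ring.
exists twt, tlt; split.
- rewrite !(interim_revenueE mx xb) lee_fin -/X -subr_ge0.
  have -> : (twt - tlt) * X + tlt - ((twb - tlb) * X + tlb) = c * (X - m).
    by rewrite /twt /tlt /c; ring.
  by rewrite mulr_le0 ?subr_le0 // ltW.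
- rewrite (interim_UminE D_refl eta_ge0 mx xb twt tlt) ?indifferent //.
  rewrite (interim_UminE D_refl eta_ge0 mx xb twb tlb (ltW c_lt0)) -/m.
  by congr EFin; rewrite /tlt /c; ring.
- have -> : alpha * twt - beta * tlt
            = alpha * twb - beta * tlb + c * (alpha + (beta - alpha) * m).
    by rewrite /twt /tlt /c; ring.
  have m_ge0 : 0 <= m := le_trans (ltW X_gt0) X_le_m.
  rewrite -[K]addr0 lerD // mulr_le0_ge0 ?(ltW c_lt0) //.
  by rewrite addr_ge0 // mulr_ge0 // subr_ge0.
- by apply/eqP; rewrite -subr_eq0 opprK indifferent.
Qed.
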